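(* Let $(X,\Sigma,\mu)$ be a semi-finite measure space, and let $E$ be the ideal in $\mathrm{L}^0(X,\Sigma,\mu)$ consisting of (equivalence classes of) measurable functions with $\sigma$-finite supports. Then $E$ admits a uo-Lebesgue topology, which is the topology of local convergence in measure, and $E$ has the countable sup property. Consequently: (1) every net in $E$ that converges locally in measure has an embedded sequence that converges almost everywhere as well as locally in measure to the same limit; (2) a sequence in $E$ converges locally in measure to $f\in E$ if and only if every subsequence has a further subsequence that converges almost everywhere to $f$.
   Context: $\mathrm{L}^0(X,\Sigma,\mu)$ is the vector lattice of measurable real functions modulo $\mu$-a.e. equality. A measure space is semi-finite if every set of infinite measure contains a measurable subset of finite positive measure. A net $(f_\alpha)$ converges locally in measure to $f$ if $\mu(\{t\in B: |f_\alpha(t)-f(t)|\geq\varepsilon\})\to0$ for every $\varepsilon>0$ and every $B\in\Sigma$ with $\mu(B)<\infty$. A uo-Lebesgue topology on a vector lattice is a Hausdorff linear topology with a zero neighbourhood basis of solid sets in which every uo-convergent net converges to the same limit (uo-convergence: $|x_\alpha-x|\wedge|y|\to0$ in order for all $y$; order convergence: there is a net $y_\beta\downarrow0$ such that for each $\beta_0$ eventually $|x_\alpha-x|\leq y_{\beta_0}$). Countable sup property: every subset with a supremum contains an at most countable subset with the same supremum. Embedded sequence: given a net $(x_\alpha)_{\alpha\in A}$, a sequence $(x_{\alpha_n})$ with $\alpha_1\leq\alpha_2\leq\dotsb$, strictly increasing when $A$ has no largest element. *)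

From HB Require Import structures.
From mathcomp Require Import all_boot all_order all_algebra.
From mathcomp Require Import all_classical all_reals all_analysis.
Set Implicit Arguments. Unset Strict Implicit. Unset Printing Implicit Defensive.
Import Order.TTheory GRing.Theory Num.Theory.
Local Open Scope classical_set_scope.
Local Open Scope ring_scope.

Definition directed (A : Type) (le : A -> A -> Prop) : Prop :=
  (exists a : A, True) /\ (forall a, le a a) /\
  (forall a b c, le a b -> le b c -> le a c) /\
  (forall a b, exists c, le a c /\ le b c).

Definition ev_net (A : Type) (le : A -> A -> Prop) (P : A -> Prop) : Prop :=
  exists a0, forall a, le a0 a -> P a.

Definition natle (m n : nat) : Prop := (m <= n)%N.

Definition embedded (A : Type) (le : A -> A -> Prop) (alpha : nat -> A) : Prop :=
  (forall n, le (alpha n) (alpha n.+1)) /\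
  ((~ exists a, forall b, le b a) ->
     forall n, le (alpha n) (alpha n.+1) /\ ~ le (alpha n.+1) (alpha n)).

Section Meas.
Context {d : measure_display} {T : measurableType d} {R : realType}.
Variable mu : {measure set T -> \bar R}.

Definition semi_finite : Prop :=
  forall A, measurable A -> mu A = +oo%E ->
    exists B, [/\ measurable B, B `<=` A & (0 < mu B < +oo)%E].

(* sigma-finite support (up to a null set, so invariant under a.e. equality) *)
Definition sigma_finite_support (f : T -> R) : Prop :=
  exists F : nat -> set T,
    (forall n, measurable (F n) /\ (mu (F n) < +oo)%E) /\
    mu.-negligible ([set t | f t != 0] `\` \bigcup_n F n).

(* the ideal E of L^0: (representatives of) measurable functions with
   sigma-finite support *)
Definition L0sf (f : T -> R) : Prop :=
  measurable_fun setT f /\ sigma_finite_support f.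

Definition ale (f g : T -> R) : Prop := {ae mu, forall t, f t <= g t}.
Definition aeq (f g : T -> R) : Prop := {ae mu, forall t, f t = g t}.

Definition is_sup_E (S : set (T -> R)) (s : T -> R) : Prop :=
  L0sf s /\ (forall g, S g -> ale g s) /\
  (forall u, L0sf u -> (forall g, S g -> ale g u) -> ale s u).

Definition countable_sup_property : Prop :=
  forall (S : set (T -> R)) (s : T -> R), S `<=` L0sf -> is_sup_E S s ->
    exists S' : set (T -> R), [/\ S' `<=` S, countable S' & is_sup_E S' s].

Definition order_conv (A : Type) (le : A -> A -> Prop)
    (x : A -> T -> R) (x0 : T -> R) : Prop :=
  exists (B : Type) (leB : B -> B -> Prop) (y : B -> T -> R),
    [/\ directed leB,
        (forall b, L0sf (y b)),
        (forall b1 b2, leB b1 b2 -> ale (y b2) (y b1)),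
        (forall b, ale (fun _ => 0) (y b)) /\
        (forall z, L0sf z -> (forall b, ale z (y b)) -> ale z (fun _ => 0)) &
        (forall b0, ev_net le (fun a => ale (fun t => `|x a t - x0 t|) (y b0)))].

Definition uo_conv (A : Type) (le : A -> A -> Prop)
    (x : A -> T -> R) (x0 : T -> R) : Prop :=
  forall y, L0sf y ->
    order_conv le (fun a t => Num.min `|x a t - x0 t| `|y t|) (fun _ => 0).

Definition lm_conv (A : Type) (le : A -> A -> Prop)
    (x : A -> T -> R) (f : T -> R) : Prop :=
  forall (eps : R) (B : set T), 0 < eps -> measurable B -> (mu B < +oo)%E ->
  forall delta : R, 0 < delta ->
    ev_net le (fun a => (mu (B `&` [set t | (eps <= `|x a t - f t|)%R]) < delta%:E)%E).

(* basic zero-neighbourhoods of the topology of local convergence in measure *)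
Definition lm_U (B : set T) (eps : R) (g : T -> R) : Prop :=
  (mu (B `&` [set t | (eps <= `|g t|)%R]) < eps%:E)%E.

Definition lm_nbhd (f : T -> R) (V : set (T -> R)) : Prop :=
  exists (B : set T) (eps : R),
    [/\ measurable B, (mu B < +oo)%E, 0 < eps &
        forall g, L0sf g -> lm_U B eps (fun t => g t - f t) -> V g].

Definition lm_tconv (A : Type) (le : A -> A -> Prop)
    (x : A -> T -> R) (f : T -> R) : Prop :=
  forall V, lm_nbhd f V -> ev_net le (fun a => V (x a)).

Definition solid_E (W : set (T -> R)) : Prop :=
  forall g h, L0sf g -> L0sf h -> W h -> ale (fun t => `|g t|) (fun t => `|h t|) -> W g.

Definition lm_is_uo_Lebesgue : Prop :=
  [/\
      (forall f g, L0sf f -> L0sf g -> ~ aeq f g ->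
         exists V W, [/\ lm_nbhd f V, lm_nbhd g W &
                         forall h, L0sf h -> V h -> W h -> False]),
      (forall f g, L0sf f -> L0sf g -> forall V, lm_nbhd (fun t => f t + g t) V ->
         exists V1 V2, [/\ lm_nbhd f V1, lm_nbhd g V2 &
           forall h1 h2, L0sf h1 -> L0sf h2 -> V1 h1 -> V2 h2 ->
             V (fun t => h1 t + h2 t)]),
      (forall (c : R) f, L0sf f -> forall V, lm_nbhd (fun t => c * f t) V ->
         exists (e : R) W, [/\ 0 < e, lm_nbhd f W &
           forall (c' : R) h, `|c' - c| < e -> L0sf h -> W h ->
             V (fun t => c' * h t)]),
      (forall V, lm_nbhd (fun _ => 0) V ->
         exists W, [/\ lm_nbhd (fun _ => 0) W, solid_E W &
                       forall h, L0sf h -> W h -> V h]) &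
      (forall (A : Type) (le : A -> A -> Prop) (x : A -> T -> R) (f : T -> R),
         directed le -> (forall a, L0sf (x a)) -> L0sf f ->
         uo_conv le x f -> lm_tconv le x f)].

End Meas.

From mathcomp Require Import all_boot all_order all_algebra.
From mathcomp Require Import all_classical all_reals all_analysis measurable_realfun.
From mathcomp.algebra_tactics Require Import ring.
Import Order.TTheory GRing.Theory Num.Theory numFieldNormedType.Exports.
Set Implicit Arguments. Unset Strict Implicit. Unset Printing Implicit Defensive.
Local Open Scope classical_set_scope.
Local Open Scope ring_scope.

(* Everything is controlled by finite-measure pieces of supports: a sigma-finite
   support is exhausted by an increasing sequence of sets of finite measure.
   Picking indices of a net so that the deviation on the [n]-th piece of all
   supports met so far is below [2^-(n+1)], Borel-Cantelli yields an embedded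
   sequence converging almost everywhere; the subsequence criterion follows.
   For the countable sup property, a countable subfamily of [S] essentially
   covers each set [{q < g}] (q rational) inside each piece, by maximising the
   measure of countable unions.  For the uo-Lebesgue property, if a net
   [y_b] decreasing to [0] kept [mu (B `&` [set y_b >= eps])] above some [c > 0],
   a minimising sequence of indices would produce a set [G] of measure [>= c]
   with [eps * \1_G <= y_b] for every [b], contradicting [inf y_b = 0]. *)

Section measurable_comparison.
Context {d : measure_display} {T : measurableType d} {R : realType}.
Implicit Types f g : T -> R.

Lemma measurable_ler_set f g : measurable_fun setT f -> measurable_fun setT g ->
  measurable [set t | f t <= g t].
Proof.
move=> mf mg; have := measurable_fun_ler mf mg measurableT (Y := [set true]) I.
by rewrite setTI; congr measurable; apply/seteqP; split => t.
Qed.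

Lemma measurable_ltr_set f g : measurable_fun setT f -> measurable_fun setT g ->
  measurable [set t | f t < g t].
Proof.
move=> mf mg; have := measurable_fun_ltr mf mg measurableT (Y := [set true]) I.
by rewrite setTI; congr measurable; apply/seteqP; split => t.
Qed.

Lemma measurable_dev (B : set T) (eps : R) g : measurable B ->
  measurable_fun setT g -> measurable (B `&` [set t | eps <= `|g t|]).
Proof.
move=> mB mg; apply: measurableI => //.
by apply: measurable_ler_set => //; exact: measurableT_comp.
Qed.

Lemma measurable_dist_dev (B : set T) (eps : R) f g : measurable B ->
  measurable_fun setT f -> measurable_fun setT g ->
  measurable (B `&` [set t | eps <= `|f t - g t|]).
Proof. by move=> mB mf mg; apply: measurable_dev => //; exact: measurable_funB. Qed.

End measurable_comparison.

Section measure_comparison.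
Context {d : measure_display} {T : measurableType d} {R : realType}.
Variable mu : {measure set T -> \bar R}.

Lemma measureU_lt_pinfty (A B : set T) : measurable A -> measurable B ->
  (mu A < +oo)%E -> (mu B < +oo)%E -> (mu (A `|` B) < +oo)%E.
Proof.
by move=> mA mB fA fB; rewrite (le_lt_trans (measureU2 _ mA mB))// lte_add_pinfty.
Qed.

Lemma le_measure_ae (A B : set T) : measurable A -> measurable B ->
  {ae mu, forall t, A t -> B t} -> (mu A <= mu B)%E.
Proof.
move=> mA mB [N [mN N0 sN]]; apply: (@le_trans _ _ (mu (B `|` N))).
  apply: le_measure; rewrite ?inE//; first exact: measurableU.
  move=> t At; have [Bt|nBt] := pselect (B t); [by left|right].
  by apply: sN => /(_ At).
by rewrite (measureU0 mB mN N0).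
Qed.

Lemma ae_of_negligible (N : set T) (P : T -> Prop) : mu.-negligible N ->
  (forall t, ~ N t -> P t) -> {ae mu, forall t, P t}.
Proof.
move=> NN HP; apply: negligibleS NN => t /= nPt.
by apply: contrapT => Nt; apply: nPt; exact: HP.
Qed.

Lemma ae_forall_countable (I : countType) (P : I -> T -> Prop) :
  (forall i, {ae mu, forall t, P i t}) -> {ae mu, forall t, forall i, P i t}.
Proof.
move=> H; pose Q n t := if (unpickle n : option I) is Some i then P i t else True.
have HQ n : {ae mu, forall t, Q n t}.
  by rewrite /Q; case: (unpickle n) => [i|]; [exact: H|exact: aeW].
by apply: filterS (ae_foralln HQ) => t Ht i; have := Ht (pickle i); rewrite /Q pickleK.
Qed.

Lemma le_measure_dev_split (B : set T) (e e1 e2 : R) (h h1 h2 : T -> R) :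
  measurable B -> measurable_fun setT h -> measurable_fun setT h1 ->
  measurable_fun setT h2 ->
  (forall t, `|h1 t| < e1 -> `|h2 t| < e2 -> `|h t| < e) ->
  (mu (B `&` [set t | (e <= `|h t|)%R]) <=
   mu (B `&` [set t | (e1 <= `|h1 t|)%R]) + mu (B `&` [set t | (e2 <= `|h2 t|)%R]))%E.
Proof.
move=> mB mh mh1 mh2 small.
have [mD1 mD2] := (measurable_dev e1 mB mh1, measurable_dev e2 mB mh2).
apply: le_trans (measureU2 _ mD1 mD2).
apply: le_measure; rewrite ?inE; [exact: measurable_dev|exact: measurableU|].
move=> t [Bt /= het].
have [?|lt1] := lerP e1 `|h1 t|; first by left.
have [?|lt2] := lerP e2 `|h2 t|; first by right.
by move: het; rewrite leNgt small.
Qed.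

Lemma nonincreasing_measure_lt (F : nat -> set T) (delta : R) :
  (forall n, measurable (F n)) -> nonincreasing_seq F ->
  (mu (F 0%N) < +oo)%E -> mu (\bigcap_n F n) = 0%E -> 0 < delta ->
  exists N, (mu (F N) < delta%:E)%E.
Proof.
move=> mF niF F0 capF0 delta0.
have := nonincreasing_cvg_mu F0 mF (bigcapT_measurable mF) niF.
rewrite capF0 => /fine_cvgP[finF /cvgr_lt /(_ delta delta0) ltF].
have [N _ /(_ N (leqnn N))[finFN ltFN]] :
    \forall N \near \oo, mu (F N) \is a fin_num /\ fine (mu (F N)) < delta.
  by near=> N; split; near: N.
by exists N; rewrite -(fineK finFN) lte_fin.
Unshelve. all: by end_near. Qed.

End measure_comparison.

Section sigma_finite_support.
Context {d : measure_display} {T : measurableType d} {R : realType}.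
Variable mu : {measure set T -> \bar R}.
Implicit Types f g h : T -> R.

Definition support_exhaustion g (G : nat -> set T) :=
  [/\ forall n, measurable (G n), forall n, (mu (G n) < +oo)%E,
      forall n m, (n <= m)%N -> G n `<=` G m
    & mu.-negligible ([set t | g t != 0] `\` \bigcup_n G n)].

Lemma sigma_finite_support_exhaustion g : sigma_finite_support mu g ->
  exists G, support_exhaustion g G.
Proof.
move=> [F [HF NF]]; have : sigma_finite (\bigcup_n F n) mu by exists F.
move=> /sigma_finiteP[G [UG ndG mG]]; exists G; split; rewrite -?UG //.
- by move=> n; case: (mG n).
- by move=> n; case: (mG n).
- by move=> n m nm; apply/subsetPset; exact: ndG.
Qed.

Lemma support_exhaustion_ae g G : support_exhaustion g G ->
  {ae mu, forall t, g t != 0 -> exists j, G j t}.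
Proof.
move=> [_ _ _ NG]; apply: (@ae_of_negligible _ _ _ mu _ _ NG) => t nNt gt0.
by apply: contrapT => nG; apply: nNt; split => // -[j _ Gj]; apply: nG; exists j.
Qed.

Lemma sigma_finite_support_sub f g h :
  sigma_finite_support mu f -> sigma_finite_support mu g ->
  (forall t, h t != 0 -> f t != 0 \/ g t != 0) -> sigma_finite_support mu h.
Proof.
move=> [F [HF NF]] [G [HG NG]] hfg; exists (fun n => F n `|` G n); split.
  move=> n; have [mF fF] := HF n; have [mG fG] := HG n.
  by split; [exact: measurableU|exact: measureU_lt_pinfty].
apply: negligibleS (negligibleU NF NG) => t /= [/hfg[ft0|gt0] nFG].
  by left; split => // -[n _ ?]; apply: nFG; exists n => //; left.
by right; split => // -[n _ ?]; apply: nFG; exists n => //; right.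
Qed.

Lemma L0sfD f g : L0sf mu f -> L0sf mu g -> L0sf mu (fun t => f t + g t).
Proof.
move=> [mf sf] [mg sg]; split; first exact: measurable_funD.
apply: (sigma_finite_support_sub sf sg) => t.
by have [->|] := eqVneq (f t) 0; [rewrite add0r; right|left].
Qed.

Lemma L0sfZ (c : R) f : L0sf mu f -> L0sf mu (fun t => c * f t).
Proof.
move=> [mf sf]; split; first exact: measurable_funM.
apply: (sigma_finite_support_sub sf sf) => t.
by rewrite mulf_eq0 negb_or => /andP[_]; left.
Qed.

Lemma L0sfB f g : L0sf mu f -> L0sf mu g -> L0sf mu (fun t => f t - g t).
Proof.
move=> Lf Lg; have := L0sfD Lf (L0sfZ (-1) Lg).
by under eq_fun do rewrite mulN1r.
Qed.

Lemma L0sf_indic (B : set T) : measurable B -> (mu B < +oo)%E ->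
  L0sf mu (\1_B : T -> R).
Proof.
move=> mB fB; split; first exact: measurable_indic.
exists (fun=> B); split => //; apply: negligibleS (negligible_set0 mu) => t /= [].
rewrite indicE; case: (boolP (t \in B)) => [/set_mem Bt _ []|]; last by rewrite eqxx.
by exists 0%N.
Qed.

Lemma ae_eventually_in_diagonal g (gs : nat -> T -> R) (Gf : nat -> set T)
    (C : nat -> nat -> set T) (K : nat -> nat -> set T) :
  support_exhaustion g Gf -> (forall k, support_exhaustion (gs k) (C k)) ->
  (forall k n j, (k < n)%N -> C k j `<=` K n j) ->
  {ae mu, forall t, (g t != 0 \/ exists k, gs k t != 0) ->
     \forall n \near \oo, (Gf n `|` K n n) t}.
Proof.
move=> HGf HC CK; have [_ _ ndGf _] := HGf.
have aeC : {ae mu, forall t, forall k, gs k t != 0 -> exists j, C k j t}.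
  by apply: ae_foralln => k; exact: support_exhaustion_ae.
apply: filterS2 (support_exhaustion_ae HGf) aeC => t aeg aegs.
case=> [/aeg[j Gfj]|[k /aegs[j Cj]]].
  by exists j => // n /= jn; left; exact: ndGf Gfj.
exists (maxn k.+1 j) => // n /=; rewrite geq_max => /andP[kn jn]; right.
by apply: (CK k) => //; have [_ _ ndC _] := HC k; exact: ndC Cj.
Qed.

End sigma_finite_support.

Section ae_convergence.
Context {d : measure_display} {T : measurableType d} {R : realType}.
Variable mu : {measure set T -> \bar R}.

Lemma ae_cvg_lm_conv (y : nat -> T -> R) (f : T -> R) :
  (forall n, measurable_fun setT (y n)) -> measurable_fun setT f ->
  {ae mu, forall t, (fun n => y n t) @ \oo --> f t} -> lm_conv mu natle y f.
Proof.
move=> my mf ae eps B eps0 mB fB delta delta0.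
pose S n := [set t | eps <= `|y n t - f t|].
have mS n : measurable (S n).
  apply: measurable_ler_set => //; apply: measurableT_comp => //.
  exact: measurable_funB.
pose E N := B `&` \bigcup_(n in [set n | (N <= n)%N]) S n.
have mE N : measurable (E N) by apply: measurableI => //; exact: bigcup_measurable.
have niE : nonincreasing_seq E.
  move=> m n mn; apply/subsetPset => t [Bt [k /= nk Skt]]; split => //.
  by exists k => //=; rewrite (leq_trans mn).
have E0 : (mu (E 0%N) < +oo)%E.
  by rewrite (le_lt_trans _ fB)// le_measure ?inE//; exact: subIsetl.
have capE0 : mu (\bigcap_N E N) = 0%E.
  apply: measure_negligible; first exact: bigcapT_measurable.
  apply: negligibleS ae => t /= Et /cvgrPdist_lt/(_ eps eps0)[N _ HN].
  have [_ [k /= Nk Skt]] := Et N I.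
  by have := HN k Nk; rewrite distrC ltNge Skt.
have [N EN] := nonincreasing_measure_lt mE niE E0 capE0 delta0.
exists N => n Nn; rewrite (le_lt_trans _ EN)// le_measure ?inE//.
- exact: measurable_dist_dev.
- by move=> t [Bt St]; split => //; exists n.
Qed.

Definition dyadic (n : nat) : R := 1 / (2 ^ n.+1)%:R.

Lemma dyadic_gt0 n : 0 < dyadic n.
Proof. by rewrite divr_gt0// ltr0n expn_gt0. Qed.

Lemma dyadic_lt (e : R) : 0 < e -> \forall n \near \oo, dyadic n < e.
Proof.
move=> e0; near=> n; apply: (@le_lt_trans _ _ n.+1%:R^-1).
  rewrite /dyadic div1r lef_pV2 ?posrE ?ltr0n ?expn_gt0//.
  by rewrite ler_nat ltnW// ltn_expl.
by near: n; exact: (near_infty_natSinv_lt (PosNum e0)).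
Unshelve. all: by end_near. Qed.

(* Borel-Cantelli: the deviation sets [D n] have summable measures, so almost
   every point lies in only finitely many of them. *)
Lemma ae_cvg_dyadic_dev (y : nat -> T -> R) (f : T -> R) (G : nat -> set T) :
  (forall n, measurable_fun setT (y n)) -> measurable_fun setT f ->
  (forall n, measurable (G n)) ->
  (forall n, (mu (G n `&` [set t | (dyadic n <= `|y n t - f t|)%R])
                < (dyadic n)%:E)%E) ->
  {ae mu, forall t, (f t != 0 \/ exists k, y k t != 0) ->
     \forall n \near \oo, G n t} ->
  {ae mu, forall t, (fun n => y n t) @ \oo --> f t}.
Proof.
move=> my mf mG small cov.
pose D n := G n `&` [set t | dyadic n <= `|y n t - f t|].
have mD n : measurable (D n) by exact: measurable_dist_dev.
have sumD : (\sum_(n <oo) mu (D n) < +oo)%E.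
  apply: (@le_lt_trans _ _ (\sum_(n <oo) (dyadic n)%:E)%E).
    by apply: lee_nneseries => n _ //; apply: ltW; exact: small.
  by rewrite (le_lt_trans (epsilon_trick0 _ _))// ltry.
have nD : {ae mu, forall t, ~ lim_sup_set D t}.
  apply: (@ae_of_negligible _ _ _ mu (lim_sup_set D)) => //.
  apply/negligibleP; last exact: lim_sup_set_cvg0.
  by apply: bigcapT_measurable => k; exact: bigcup_measurable.
apply: filterS2 cov nD => t Gt nDt.
have [supp|nsupp] := pselect (f t != 0 \/ exists k, y k t != 0); last first.
  have f0 : f t = 0 by apply: contrapT => ft0; apply: nsupp; left; apply/eqP.
  have y0 k : y k t = 0.
    by apply: contrapT => ykt0; apply: nsupp; right; exists k; apply/eqP.
  by rewrite f0; under eq_fun do rewrite y0; exact: cvg_cst.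
have evD : \forall n \near \oo, ~ D n t.
  apply: contrapT => nev; apply: nDt => N _; apply: contrapT => nDN; apply: nev.
  by exists N => // n /= Nn Dn; apply: nDN; exists n.
apply/cvgrPdist_lt => e e0; near=> n.
rewrite distrC; apply: (@lt_trans _ _ (dyadic n)); last by near: n; exact: dyadic_lt.
rewrite ltNge; apply/negP => devn; apply: (near evD n) => //.
by split => //; apply: (near (Gt supp) n).
Unshelve. all: by end_near. Qed.

End ae_convergence.

Lemma directed_strict_upper (A : Type) (le : A -> A -> Prop) : directed le ->
  ~ (exists a, forall b, le b a) ->
  forall a c, exists b, [/\ le a b, le c b & ~ le b a].
Proof.
move=> [_ [_ [trans dir]]] noMax a c.
have [e nea] : exists e, ~ le e a.
  apply: contrapT => nex; apply: noMax; exists a => b.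
  by apply: contrapT => nba; apply: nex; exists b.
have [a' [aa' ca']] := dir a c; have [b [a'b eb]] := dir a' e.
exists b; split; [exact: trans aa' a'b|exact: trans ca' a'b|].
by move=> ba; apply: nea; exact: trans eb ba.
Qed.

Section net_embedded_sequence.
Context {d : measure_display} {T : measurableType d} {R : realType}.
Variable mu : {measure set T -> \bar R}.
Variables (A : Type) (le : A -> A -> Prop) (x : A -> T -> R) (f : T -> R).
Hypotheses (dir : directed le) (lmc : lm_conv mu le x f).

(* The clause on [G] is conditional so that a choice function can be taken
   over all triples [(a, G, n)]. *)
Lemma lm_conv_next_index a (G : set T) n : exists b, [/\ le a b,
  ~ (exists c, forall b, le b c) -> ~ le b a &
  measurable G -> (mu G < +oo)%E ->
    (mu (G `&` [set t | (dyadic n <= `|x b t - f t|)%R]) < (dyadic n)%:E)%E].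
Proof.
have [a0 Ha0] : exists a0, forall b, le a0 b -> measurable G -> (mu G < +oo)%E ->
    (mu (G `&` [set t | (dyadic n <= `|x b t - f t|)%R]) < (dyadic n)%:E)%E.
  have [[mG fG]|nG] := pselect (measurable G /\ (mu G < +oo)%E); last first.
    by exists a => b _ mG fG; exfalso; apply: nG.
  have [a0 Ha0] := lmc (dyadic_gt0 n) mG fG (dyadic_gt0 n).
  by exists a0 => b /Ha0.
have [noMax|hasMax] := pselect (~ exists c, forall b, le b c).
  have [b [ab a0b nba]] := directed_strict_upper dir noMax a a0.
  by exists b; split => //; exact: Ha0.
have [_ [_ [_ dirl]]] := dir; have [b [ab a0b]] := dirl a a0.
by exists b; split => //; exact: Ha0.
Qed.

Hypotheses (Lx : forall a, L0sf mu (x a)) (Lf : L0sf mu f).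

(* The indices are chosen recursively; at step [n] the set [G n] collects the
   [n]-th pieces of exhaustions of the supports of [f] and of all previously
   chosen [x (alpha k)], so that [G] eventually covers all these supports. *)
Lemma lm_conv_embedded_ae_cvg : exists alpha : nat -> A, embedded le alpha /\
  {ae mu, forall t, (fun n => x (alpha n) t) @ \oo --> f t}.
Proof.
have [[a0 _] _] := dir.
have [nxt Hnxt] := choice (fun p : A * set T * nat =>
  lm_conv_next_index p.1.1 p.1.2 p.2).
have [Gf HGf] := sigma_finite_support_exhaustion Lf.2.
have [mGf fGf _ _] := HGf.
have [C HC] := choice (fun a => sigma_finite_support_exhaustion (Lx a).2).
pose step n (p : A * (nat -> set T)) :=
  let b := nxt (p.1, Gf n `|` p.2 n, n) in (b, fun j => p.2 j `|` C b j).
pose st n := iteri n step (a0, fun=> set0).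
pose alpha n := (st n.+1).1; pose K n := (st n).2; pose G n := Gf n `|` K n n.
have alphaE n : alpha n = nxt ((st n).1, G n, n) by [].
have stE n : (st n.+1).1 = alpha n by [].
have mK n j : measurable (K n j) /\ (mu (K n j) < +oo)%E.
  elim: n => [|n [mKn fKn]]; first by rewrite /K /= measure0.
  have [mC fC _ _] := HC (alpha n).
  by split; [exact: measurableU|exact: measureU_lt_pinfty].
have mG n : measurable (G n) /\ (mu (G n) < +oo)%E.
  have [mKn fKn] := mK n n.
  by split; [exact: measurableU|exact: measureU_lt_pinfty].
have CK k n j : (k < n)%N -> C (alpha k) j `<=` K n j.
  elim: n => // n IH; rewrite ltnS leq_eqVlt => /orP[/eqP ->|kn] t Ct.
    by right.
  by left; exact: IH.
exists alpha; split.
  split => [n|noMax n].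
    by rewrite [alpha n.+1]alphaE -stE; case: (Hnxt (alpha n, G n.+1, n.+1)).
  rewrite [alpha n.+1]alphaE -stE; case: (Hnxt (alpha n, G n.+1, n.+1)).
  by move=> ab /(_ noMax).
apply: (ae_cvg_dyadic_dev (G := G)).
- by move=> n; case: (Lx (alpha n)).
- by case: Lf.
- by move=> n; case: (mG n).
- move=> n; have [mGn fGn] := mG n; rewrite alphaE.
  by case: (Hnxt ((st n).1, G n, n)) => _ _; apply.
exact: ae_eventually_in_diagonal HGf (fun k => HC (alpha k)) CK.
Qed.

End net_embedded_sequence.

Lemma directed_natle : directed natle.
Proof.
split; first by exists 0%N.
split; first exact: leqnn.
split; first by move=> a b c; exact: leq_trans.
by move=> a b; exists (maxn a b); rewrite /natle leq_maxl leq_maxr.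
Qed.

Lemma homo_ltn_infl (phi : nat -> nat) : {homo phi : m n / (m < n)%N} ->
  forall n, (n <= phi n)%N.
Proof. by move=> hphi; elim => // n IH; exact: leq_ltn_trans IH (hphi _ _ _). Qed.

Lemma embedded_natle_homo (alpha : nat -> nat) : embedded natle alpha ->
  {homo alpha : m n / (m < n)%N}.
Proof.
move=> [_ strict]; apply: homo_ltn => [? ? ?|n]; first exact: ltn_trans.
have noMax : ~ exists a : nat, forall b, natle b a.
  by move=> [a /(_ a.+1)]; rewrite /natle ltnn.
by have [_] := strict noMax n; rewrite /natle ltnNge => /negP.
Qed.

Section local_convergence_in_measure.
Context {d : measure_display} {T : measurableType d} {R : realType}.
Variable mu : {measure set T -> \bar R}.

Lemma lm_conv_embedded_sequence (A : Type) (le : A -> A -> Prop)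
    (x : A -> T -> R) (f : T -> R) :
  directed le -> (forall a, L0sf mu (x a)) -> L0sf mu f -> lm_conv mu le x f ->
  exists alpha : nat -> A,
    [/\ embedded le alpha,
        {ae mu, forall t, (fun n => x (alpha n) t) @ \oo --> f t} &
        lm_conv mu natle (fun n => x (alpha n)) f].
Proof.
move=> dir Lx Lf lmc; have [alpha [emb ae]] := lm_conv_embedded_ae_cvg dir lmc Lx Lf.
exists alpha; split => //; apply: ae_cvg_lm_conv ae => [n|]; first exact: (Lx _).1.
exact: Lf.1.
Qed.

Lemma lm_conv_subseq (x : nat -> T -> R) (f : T -> R) (phi : nat -> nat) :
  {homo phi : m n / (m < n)%N} -> lm_conv mu natle x f ->
  lm_conv mu natle (fun n => x (phi n)) f.
Proof.
move=> hphi lmc eps B eps0 mB fB delta delta0.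
have [N HN] := lmc eps B eps0 mB fB delta delta0.
by exists N => n Nn; apply: HN; exact: leq_trans Nn (homo_ltn_infl hphi n).
Qed.

Lemma lm_conv_subseq_ae_cvg (x : nat -> T -> R) (f : T -> R) :
  (forall n, L0sf mu (x n)) -> L0sf mu f -> lm_conv mu natle x f ->
  exists psi : nat -> nat, {homo psi : m n / (m < n)%N} /\
    {ae mu, forall t, (fun n => x (psi n) t) @ \oo --> f t}.
Proof.
move=> Lx Lf lmc; have [psi [emb ae]] := lm_conv_embedded_ae_cvg directed_natle lmc Lx Lf.
by exists psi; split => //; exact: embedded_natle_homo.
Qed.

Lemma subseq_ae_cvg_lm_conv (x : nat -> T -> R) (f : T -> R) :
  (forall n, L0sf mu (x n)) -> L0sf mu f ->
  (forall phi : nat -> nat, {homo phi : m n / (m < n)%N} ->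
     exists psi : nat -> nat, {homo psi : m n / (m < n)%N} /\
       {ae mu, forall t, (fun n => x (phi (psi n)) t) @ \oo --> f t}) ->
  lm_conv mu natle x f.
Proof.
move=> Lx Lf subseq eps B eps0 mB fB delta delta0.
pose P n := (mu (B `&` [set t | (eps <= `|x n t - f t|)%R]) < delta%:E)%E.
apply: contrapT => notev.
have later N : exists n, (N <= n)%N /\ ~ P n.
  apply: contrapT => nex; apply: notev; exists N => n Nn.
  by apply: contrapT => nPn; apply: nex; exists n.
have [h Hh] := choice later.
pose phi := fix phi n := if n is m.+1 then h (phi m).+1 else h 0%N.
have hphi : {homo phi : m n / (m < n)%N}.
  by apply: homo_ltn => [? ? ?|i]; [exact: ltn_trans|case: (Hh (phi i).+1)].
have nP n : ~ P (phi n) by case: n => [|n]; [case: (Hh 0%N)|case: (Hh (phi n).+1)].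
have [psi [_ ae]] := subseq phi hphi.
have [N HN] := ae_cvg_lm_conv (fun n => (Lx _).1) Lf.1 ae eps0 mB fB delta0.
exact: nP (psi N) (HN N (leqnn N)).
Qed.

Lemma lm_conv_iff_subseq_ae_cvg (x : nat -> T -> R) (f : T -> R) :
  (forall n, L0sf mu (x n)) -> L0sf mu f ->
  lm_conv mu natle x f <->
  (forall phi : nat -> nat, {homo phi : m n / (m < n)%N} ->
     exists psi : nat -> nat, {homo psi : m n / (m < n)%N} /\
       {ae mu, forall t, (fun n => x (phi (psi n)) t) @ \oo --> f t}).
Proof.
move=> Lx Lf; split => [lmc phi hphi|]; last exact: subseq_ae_cvg_lm_conv.
by apply: (lm_conv_subseq_ae_cvg (x := fun n => x (phi n))) => //; exact: lm_conv_subseq.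
Qed.

End local_convergence_in_measure.

Section local_measure_topology.
Context {d : measure_display} {T : measurableType d} {R : realType}.
Variable mu : {measure set T -> \bar R}.
Implicit Types f g h : T -> R.

Lemma lm_tconv_iff_lm_conv (A : Type) (le : A -> A -> Prop) (x : A -> T -> R) f :
  (forall a, L0sf mu (x a)) -> L0sf mu f ->
  lm_tconv mu le x f <-> lm_conv mu le x f.
Proof.
move=> Lx Lf; split => [tc eps B eps0 mB fB delta delta0|lmc V].
  pose e := Num.min eps delta; have e0 : 0 < e by rewrite lt_min eps0 delta0.
  have [a0 Ha0] : ev_net le (fun a => lm_U mu B e (fun t => x a t - f t)).
    by apply: (tc (fun g => lm_U mu B e (fun t => g t - f t))); exists B, e; split.
  exists a0 => a /Ha0 lt_e.
  have le_eps : (mu (B `&` [set t | (eps <= `|x a t - f t|)%R]) <=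
                 mu (B `&` [set t | (e <= `|x a t - f t|)%R]))%E.
    rewrite le_measure ?inE//; try exact: measurable_dist_dev (Lx a).1 Lf.1.
    by move=> t [Bt /= Ht]; split => //=; apply: le_trans Ht; rewrite ge_min lexx.
  by apply: le_lt_trans le_eps (lt_le_trans lt_e _); rewrite lee_fin ge_min lexx orbT.
move=> [B [eps [mB fB eps0 HV]]].
have [a0 Ha0] := lmc eps B eps0 mB fB eps eps0.
by exists a0 => a /Ha0; apply: HV.
Qed.

Lemma not_aeq_dev_gt0 f g : L0sf mu f -> L0sf mu g -> ~ aeq mu f g ->
  exists (B : set T) (e : R), [/\ measurable B, (mu B < +oo)%E, 0 < e &
    (0 < mu (B `&` [set t | (e <= `|f t - g t|)%R]))%E].
Proof.
move=> Lf Lg nfg; have [mfg sfg] := L0sfB Lf Lg.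
have [C [mC fC _ NC]] := sigma_finite_support_exhaustion sfg.
pose D n m := C n `&` [set t | (m.+1%:R^-1 <= `|f t - g t|)%R].
have [n [m Dpos]] : exists n m, (0 < mu (D n m))%E.
  apply: contrapT => nD; apply: nfg.
  have D0 n m : mu.-negligible (D n m).
    apply/negligibleP; first exact: measurable_dev.
    apply/eqP; rewrite eq_le measure_ge0 andbT leNgt; apply/negP => ?.
    by apply: nD; exists n, m.
  have ND := negligible_bigcup (fun n => negligible_bigcup (D0 n)).
  apply: negligibleS (negligibleU ND NC) => t /= /eqP fgt.
  have fgt0 : f t - g t != 0 by rewrite subr_eq0.
  have [[k _ Ck]|nC] := pselect ((\bigcup_n C n) t); last by right.
  have fg_pos : 0 < `|f t - g t| by rewrite normr_gt0.
  have [N _ /(_ N (leqnn N)) ltN] := near_infty_natSinv_lt (PosNum fg_pos).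
  by left; exists k => //; exists N => //; split => //=; exact: ltW.
by exists (C n), m.+1%:R^-1; split; rewrite ?invr_gt0.
Qed.

Lemma lm_hausdorff f g : L0sf mu f -> L0sf mu g -> ~ aeq mu f g ->
  exists V W, [/\ lm_nbhd mu f V, lm_nbhd mu g W &
    forall h, L0sf mu h -> V h -> W h -> False].
Proof.
move=> Lf Lg nfg; have [B [e [mB fB e0 Dpos]]] := not_aeq_dev_gt0 Lf Lg nfg.
have mD := measurable_dist_dev e mB Lf.1 Lg.1.
have Dfin : (mu (B `&` [set t | (e <= `|f t - g t|)%R]) < +oo)%E.
  by rewrite (le_lt_trans _ fB)// le_measure ?inE//.
pose m := fine (mu (B `&` [set t | (e <= `|f t - g t|)%R])).
have mE : mu (B `&` [set t | (e <= `|f t - g t|)%R]) = m%:E.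
  by rewrite fineK// ge0_fin_numE.
have m0 : 0 < m by rewrite -lte_fin -mE.
pose eps := Num.min (e / 2) (m / 2).
have eps0 : 0 < eps by rewrite lt_min !divr_gt0.
exists (fun h => lm_U mu B eps (fun t => h t - f t)),
       (fun h => lm_U mu B eps (fun t => h t - g t)).
split; [by exists B, eps; split|by exists B, eps; split|move=> h Lh Vh Wh].
have := @le_measure_dev_split _ _ _ mu B e eps eps _ _ _ mB
  (measurable_funB Lf.1 Lg.1) (measurable_funB Lh.1 Lf.1) (measurable_funB Lh.1 Lg.1).
have small t : `|h t - f t| < eps -> `|h t - g t| < eps -> `|f t - g t| < e.
  move=> hf hg; have -> : f t - g t = (h t - g t) - (h t - f t) by ring.
  apply: le_lt_trans (ler_normB _ _) _; apply: lt_le_trans (ltrD hg hf) _.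
  by rewrite [leRHS](splitr e) lerD // ge_min lexx.
move=> /(_ small) /le_lt_trans /(_ (lteD Vh Wh)).
rewrite mE -EFinD lte_fin ltNge => /negP; apply.
by rewrite [leRHS](splitr m) lerD // ge_min lexx orbT.
Qed.

Lemma lm_add_continuous f g : L0sf mu f -> L0sf mu g ->
  forall V, lm_nbhd mu (fun t => f t + g t) V ->
  exists V1 V2, [/\ lm_nbhd mu f V1, lm_nbhd mu g V2 &
    forall h1 h2, L0sf mu h1 -> L0sf mu h2 -> V1 h1 -> V2 h2 ->
      V (fun t => h1 t + h2 t)].
Proof.
move=> Lf Lg V [B [eps [mB fB eps0 HV]]].
have e2 : 0 < eps / 2 by rewrite divr_gt0.
exists (fun h => lm_U mu B (eps / 2) (fun t => h t - f t)),
       (fun h => lm_U mu B (eps / 2) (fun t => h t - g t)).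
split; [by exists B, (eps / 2); split|by exists B, (eps / 2); split|].
move=> h1 h2 L1 L2 V1 V2; apply: HV; first exact: L0sfD.
have := @le_measure_dev_split _ _ _ mu B eps (eps / 2) (eps / 2) _ _ _ mB
  (measurable_funB (measurable_funD L1.1 L2.1) (measurable_funD Lf.1 Lg.1))
  (measurable_funB L1.1 Lf.1) (measurable_funB L2.1 Lg.1).
have small t : `|h1 t - f t| < eps / 2 -> `|h2 t - g t| < eps / 2 ->
    `|h1 t + h2 t - (f t + g t)| < eps.
  move=> h1f h2g; have -> : h1 t + h2 t - (f t + g t) = (h1 t - f t) + (h2 t - g t).
    by ring.
  by apply: le_lt_trans (ler_normD _ _) _; rewrite [ltRHS](splitr eps) ltrD.
move=> /(_ small) /le_lt_trans /(_ (lteD V1 V2)).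
by rewrite -EFinD -splitr.
Qed.

Lemma measure_large_values_lt (B : set T) g (eps : R) : measurable B ->
  (mu B < +oo)%E -> measurable_fun setT g -> 0 < eps ->
  exists N : nat, (mu (B `&` [set t | (N.+1%:R <= `|g t|)%R]) < eps%:E)%E.
Proof.
move=> mB fB mg eps0.
pose F n := B `&` [set t | (n.+1%:R : R) <= `|g t|].
have mF n : measurable (F n) by exact: measurable_dev.
have niF : nonincreasing_seq F.
  move=> m n mn; apply/subsetPset => t [Bt /= Ht]; split => //=.
  by apply: le_trans Ht; rewrite ler_nat ltnS.
have F0 : (mu (F 0%N) < +oo)%E.
  by rewrite (le_lt_trans _ fB)// le_measure ?inE//; exact: subIsetl.
have capF : mu (\bigcap_n F n) = 0%E.
  rewrite (_ : \bigcap_n F n = set0) ?measure0//.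
  apply/seteqP; split => // t /(_ (Num.truncn `|g t|) I)[_ /=].
  by rewrite leNgt truncnS_gt.
exact: nonincreasing_measure_lt mF niF F0 capF eps0.
Qed.

(* Outside the small set where [|f| >= M], the bound
   [|c' h - c f| <= |c'| |h - f| + |c' - c| |f|] makes [c' h - c f] small. *)
Lemma lm_scale_continuous (c : R) f : L0sf mu f ->
  forall V, lm_nbhd mu (fun t => c * f t) V ->
  exists (e : R) W, [/\ 0 < e, lm_nbhd mu f W &
    forall (c' : R) h, `|c' - c| < e -> L0sf mu h -> W h ->
      V (fun t => c' * h t)].
Proof.
move=> Lf V [B [eps [mB fB eps0 HV]]].
have e2 : 0 < eps / 2 by rewrite divr_gt0.
have [N HN] := measure_large_values_lt mB fB Lf.1 e2.
pose M : R := N.+1%:R; have M0 : 0 < M by rewrite ltr0n.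
have c1 : 0 < `|c| + 1 by rewrite ltr_wpDl.
pose eta := Num.min (eps / 2) (eps / (2 * (`|c| + 1))).
have eta0 : 0 < eta by rewrite lt_min e2 divr_gt0// mulr_gt0.
pose e := Num.min 1 (eps / (2 * M)).
have e0 : 0 < e by rewrite lt_min ltr01 divr_gt0// mulr_gt0.
exists e, (fun h => lm_U mu B eta (fun t => h t - f t)); split => //.
  by exists B, eta; split.
move=> c' h cc' Lh Wh; apply: HV; first exact: L0sfZ.
have c'_le : `|c'| <= `|c| + 1.
  rewrite -[c'](subrK c) addrC; apply: le_trans (ler_normD _ _) _.
  by rewrite lerD2l ltW// (lt_le_trans cc')// ge_min lexx.
have small t : `|h t - f t| < eta -> `|f t| < M -> `|c' * h t - c * f t| < eps.
  move=> hf fM; have -> : c' * h t - c * f t = c' * (h t - f t) + (c' - c) * f t.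
    by ring.
  apply: le_lt_trans (ler_normD _ _) _; rewrite !normrM [ltRHS](splitr eps).
  apply: ltr_leD.
    apply: le_lt_trans (ler_wpM2r (normr_ge0 _) c'_le) _.
    have -> : eps / 2 = (`|c| + 1) * (eps / (2 * (`|c| + 1))).
      by field; rewrite gt_eqF.
    by rewrite ltr_pM2l// (lt_le_trans hf)// ge_min lexx orbT.
  have -> : eps / 2 = eps / (2 * M) * M by field; rewrite gt_eqF.
  apply: ler_pM => //; last exact: ltW.
  by rewrite ltW// (lt_le_trans cc')// ge_min lexx orbT.
have := @le_measure_dev_split _ _ _ mu B eps eta M _ _ _ mB
  (measurable_funB (measurable_funM (measurable_cst c') Lh.1)
                   (measurable_funM (measurable_cst c) Lf.1))
  (measurable_funB Lh.1 Lf.1) Lf.1 small.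
move=> /le_lt_trans /(_ (lteD Wh HN)) /lt_le_trans; apply.
by rewrite -EFinD lee_fin [leRHS](splitr eps) lerD2r ge_min lexx.
Qed.

Lemma lm_solid_basis V : lm_nbhd mu (fun _ => 0) V ->
  exists W, [/\ lm_nbhd mu (fun _ => 0) W, solid_E mu W &
    forall h, L0sf mu h -> W h -> V h].
Proof.
move=> [B [eps [mB fB eps0 HV]]].
exists (fun h => lm_U mu B eps (fun t => h t - 0)); split => //.
  by exists B, eps; split.
move=> g h Lg Lh Wh gh; apply: le_lt_trans Wh; apply: le_measure_ae.
- exact: measurable_dist_dev Lg.1 (measurable_cst _).
- exact: measurable_dist_dev Lh.1 (measurable_cst _).
apply: filterS gh => t gh [Bt /= Ht]; split => //=.
by move: Ht; rewrite !subr0 => Ht; exact: le_trans Ht gh.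
Qed.

End local_measure_topology.

Lemma seq_of_seqs (I : Type) (cs : nat -> nat -> I) :
  exists c : nat -> I, (forall n, exists m k, c n = cs m k) /\
                       (forall m k, exists n, c n = cs m k).
Proof.
exists (fun n => if (unpickle n : option (nat * nat)) is Some (m, k) then cs m k
                 else cs 0%N 0%N); split => [n|m k].
  by case: (unpickle n) => [[m k]|]; [exists m, k|exists 0%N, 0%N].
by exists (pickle (m, k)); rewrite pickleK.
Qed.

Section countable_sup.
Context {d : measure_display} {T : measurableType d} {R : realType}.
Variable mu : {measure set T -> \bar R}.

Section essential_cover.
Variables (I : Type) (S : set I) (G : set T) (F : I -> set T).
Hypotheses (mG : measurable G) (fG : (mu G < +oo)%E)
  (mF : forall i, S i -> measurable (F i)).

Let cover (c : nat -> I) := G `&` \bigcup_k F (c k).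

Let measurable_cover c : (forall k, S (c k)) -> measurable (cover c).
Proof.
by move=> Sc; apply: measurableI => //; apply: bigcup_measurable => k _; exact: mF.
Qed.

(* The supremum of [mu (cover c)] over all countable subfamilies is attained,
   by merging an approximating sequence of subfamilies into a single one. *)
Lemma max_countable_cover : S !=set0 -> exists c, (forall k, S (c k)) /\
  forall c', (forall k, S (c' k)) -> (mu (cover c') <= mu (cover c))%E.
Proof.
move=> [i0 Si0].
pose M := ereal_sup [set mu (cover c) | c in [set c | forall k, S (c k)]].
have le_M c : (forall k, S (c k)) -> (mu (cover c) <= M)%E.
  by move=> Sc; apply: ereal_sup_ubound; exists c.
have M_le : (M <= mu G)%E.
  apply: ge_ereal_sup => _ [c Sc <-].
  by rewrite le_measure ?inE//; [exact: measurable_cover|exact: subIsetl].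
have Mfin : M \is a fin_num.
  rewrite ge0_fin_numE ?(le_lt_trans M_le)//.
  exact: le_trans (measure_ge0 mu _) (le_M (fun=> i0) (fun=> Si0)).
have approx m : exists c, (forall k, S (c k)) /\
    (M - (m.+1%:R^-1)%:E < mu (cover c))%E.
  have e0 : (0 : R) < m.+1%:R^-1 by rewrite invr_gt0.
  have [_ [c Sc <-] ?] := @ub_ereal_sup_adherent R _ _ e0 Mfin.
  by exists c.
have [cs Hcs] := choice approx.
have [c [c_cs cs_c]] := seq_of_seqs cs.
have Sc n : S (c n) by have [m [k ->]] := c_cs n; case: (Hcs m) => + _; apply.
exists c; split => // c' Sc'; apply: le_trans (le_M _ Sc') _.
apply/lee_subgt0Pr => e e0.
have [m _ /(_ m (leqnn m)) me] := near_infty_natSinv_lt (PosNum e0).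
apply: (@le_trans _ _ (M - (m.+1%:R^-1)%:E)%E); first by rewrite leeB// lee_fin ltW.
apply: le_trans (ltW (Hcs m).2) _.
rewrite le_measure ?inE//; [|exact: measurable_cover|].
  by apply: measurable_cover; case: (Hcs m).
move=> t [Gt [k _ Fkt]]; split => //.
by have [n cn] := cs_c m k; exists n => //; rewrite cn.
Qed.

Lemma countable_essential_cover : S !=set0 -> exists c : nat -> I, (forall k, S (c k)) /\
  forall i, S i -> mu (G `&` F i `\` \bigcup_k F (c k)) = 0%E.
Proof.
move=> S0; have [c [Sc cmax]] := max_countable_cover S0; exists c; split => // i Si.
pose c' n := if n is k.+1 then c k else i.
have Sc' n : S (c' n) by case: n.
have mD : measurable (G `&` F i `\` \bigcup_k F (c k)).
  apply: measurableD; first by apply: measurableI => //; exact: mF.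
  by apply: bigcup_measurable => k _; exact: mF.
have cover_c' : cover c' = cover c `|` (G `&` F i `\` \bigcup_k F (c k)).
  apply/seteqP; split => [t [Gt [[|k] _ /= Ft]]|t [[Gt [k _ Ft]]|[[Gt Ft] _]]].
  - by have [Ut|nUt] := pselect ((\bigcup_k F (c k)) t); [left|right].
  - by left; split => //; exists k.
  - by split => //; exists k.+1.
  - by split => //; exists 0%N.
have cfin : mu (cover c) \is a fin_num.
  rewrite ge0_fin_numE// (le_lt_trans _ fG)// le_measure ?inE//.
  - exact: measurable_cover.
  - exact: subIsetl.
have := cmax c' Sc'; rewrite cover_c' measureU//; last 2 first.
- exact: measurable_cover.
- by apply/seteqP; split => // t [[_ Ut] [_ nUt]].
rewrite -[X in (_ <= X)%E]adde0 leeD2lE// => le0.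
by apply/eqP; rewrite eq_le le0 measure_ge0.
Qed.

End essential_cover.

Lemma ae_le_of_rat_covers (G : nat -> set T) (g u : T -> R)
    (c : rat * nat -> nat -> T -> R) :
  (forall p, mu.-negligible (G p.2 `&` [set t | ratr p.1 < g t] `\`
                             \bigcup_k [set t | ratr p.1 < c p k t])) ->
  (forall p k, ale mu (c p k) u) ->
  {ae mu, forall t, (exists n, G n t) -> g t <= u t}.
Proof.
move=> covered cu.
have aeu : {ae mu, forall t, forall pk : rat * nat * nat, c pk.1 pk.2 t <= u t}.
  by apply: ae_forall_countable => -[p k]; exact: cu.
have aecov : {ae mu, forall t, forall p : rat * nat, G p.2 t -> ratr p.1 < g t ->
    exists k, ratr p.1 < c p k t}.
  apply: ae_forall_countable => p.
  apply: (@ae_of_negligible _ _ _ mu _ _ (covered p)) => t nD Gt lt.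
  by apply: contrapT => nk; apply: nD; split => // -[k _ ?]; apply: nk; exists k.
apply: filterS2 aeu aecov => t tu tcov [n Gnt].
rewrite leNgt; apply/negP => ug.
have [q] := rat_in_itvoo ug; rewrite in_itv /= => /andP[uq qg].
have [k qc] := tcov (q, n) Gnt qg.
by have := lt_le_trans qc (tu ((q, n), k)); rewrite ltNge (ltW uq).
Qed.

Lemma ae_le_off_supports (s g0 g u : T -> R) (Cs Cg : nat -> set T) :
  support_exhaustion mu s Cs -> support_exhaustion mu g0 Cg ->
  ale mu g s -> ale mu g0 u ->
  {ae mu, forall t, ~ (exists n, (Cs n `|` Cg n) t) -> g t <= u t}.
Proof.
move=> /support_exhaustion_ae aes /support_exhaustion_ae aeg0 gs g0u.
near=> t => nC.
have sC : s t != 0 -> exists j, Cs j t by exact: (near aes t).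
have g0C : g0 t != 0 -> exists j, Cg j t by exact: (near aeg0 t).
have s0 : s t = 0 by apply: contrapT => /eqP/sC[j ?]; apply: nC; exists j; left.
have g00 : g0 t = 0 by apply: contrapT => /eqP/g0C[j ?]; apply: nC; exists j; right.
have gst : g t <= s t by exact: (near gs t).
have g0ut : g0 t <= u t by exact: (near g0u t).
by rewrite (le_trans gst)// s0 -g00.
Unshelve. all: by end_near. Qed.

Lemma L0sf_countable_sup : countable_sup_property mu.
Proof.
move=> S s SE [Ls [ubS lubS]].
have [[g0 Sg0]|S0] := pselect (S !=set0); last first.
  exists S; split => //; rewrite (_ : S = set0); first exact: countable0.
  by apply/seteqP; split => // g Sg; apply: S0; exists g.
have [Cs HCs] := sigma_finite_support_exhaustion Ls.2.
have [Cg HCg] := sigma_finite_support_exhaustion (SE _ Sg0).2.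
have [[mCs fCs _ _] [mCg fCg _ _]] := (HCs, HCg).
pose G n := Cs n `|` Cg n.
have mlt (q : rat) g : S g -> measurable [set t | ratr q < g t].
  by move=> Sg; apply: measurable_ltr_set; [exact: measurable_cst|exact: (SE g Sg).1].
have cover (p : rat * nat) : exists c : nat -> T -> R, (forall k, S (c k)) /\
    forall g, S g -> mu (G p.2 `&` [set t | ratr p.1 < g t] `\`
                         \bigcup_k [set t | ratr p.1 < c k t]) = 0%E.
  apply: countable_essential_cover => //; last by exists g0.
  - exact: measurableU.
  - exact: measureU_lt_pinfty.
  - by move=> g Sg; exact: mlt.
have [c Hc] := choice cover.
pose F w := if w is Some (p, k) then c p k else g0.
have SF w : S (F w) by case: w => [[p k]|//] /=; case: (Hc p) => + _; apply.
exists (F @` setT); split.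
- by move=> _ [w _ <-].
- by apply: sub_countable (card_image_le F setT) _; exact: countableP.
split => //; split => [_ [w _ <-]|u Lu ubu]; first exact: ubS.
apply: lubS => // g Sg.
have aecov : {ae mu, forall t, (exists n, G n t) -> g t <= u t}.
  apply: (ae_le_of_rat_covers (c := c)) => [p|p k]; last first.
    by apply: ubu; exists (Some (p, k)).
  have [_ /(_ g Sg) null] := Hc p; apply/negligibleP => //.
  apply: measurableD; first by apply: measurableI; [exact: measurableU|exact: mlt].
  by apply: bigcup_measurable => k _; apply: mlt; case: (Hc p) => + _; apply.
have ug0 : ale mu g0 u by apply: ubu; exists None.
apply: filterS2 aecov (ae_le_off_supports HCs HCg (ubS g Sg) ug0) => t gu_in gu_off.
by have [|] := pselect (exists n, G n t); [exact: gu_in|exact: gu_off].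
Qed.

End countable_sup.

Lemma directed_cofinal_seq (I : Type) (le : I -> I -> Prop) : directed le ->
  forall bp : nat -> I, exists bs : nat -> I,
    (forall k n, (k <= n)%N -> le (bs k) (bs n)) /\ (forall n, le (bp n) (bs n)).
Proof.
move=> [_ [refl [trans dir]]] bp.
have [ub Hub] := choice (fun p : I * I => dir p.1 p.2).
pose bs := fix bs n := if n is k.+1 then ub (bs k, bp k.+1) else bp 0%N.
have bsS n : le (bs n) (bs n.+1) by case: (Hub (bs n, bp n.+1)).
exists bs; split => [k n|[|n]]; last 2 first.
- exact: refl.
- by case: (Hub (bs n, bp n.+1)).
elim: n => [|n IH]; first by rewrite leqn0 => /eqP ->.
by rewrite leq_eqVlt => /orP[/eqP ->|/IH kn]; [exact: refl|exact: trans kn (bsS n)].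
Qed.

Section decreasing_net.
Context {d : measure_display} {T : measurableType d} {R : realType}.
Variable mu : {measure set T -> \bar R}.
Variables (J : Type) (le : J -> J -> Prop) (y : J -> T -> R).
Hypotheses (dir : directed le) (Ly : forall b, L0sf mu (y b))
  (y_decr : forall b1 b2, le b1 b2 -> ale mu (y b2) (y b1))
  (y_ge0 : forall b, ale mu (fun _ => 0) (y b))
  (y_inf0 : forall z, L0sf mu z -> (forall b, ale mu z (y b)) ->
     ale mu z (fun _ => 0)).
Variables (B : set T) (eps : R).
Hypotheses (mB : measurable B) (fB : (mu B < +oo)%E) (eps0 : 0 < eps).

Let D b := B `&` [set t | eps <= y b t].

Let measurable_ge_eps b : measurable [set t | eps <= y b t].
Proof. by apply: measurable_ler_set; [exact: measurable_cst|exact: (Ly b).1]. Qed.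

Let mD b : measurable (D b). Proof. exact: measurableI mB (measurable_ge_eps b). Qed.

Let muD_decr b b' : le b b' -> (mu (D b') <= mu (D b))%E.
Proof.
move=> bb'; apply: le_measure_ae => //; apply: filterS (y_decr bb').
by move=> t yb'b [Bt ebt]; split => //; exact: le_trans ebt yb'b.
Qed.

Let c := ereal_inf (range (fun b => mu (D b))).

Let c_le b : (c <= mu (D b))%E. Proof. by apply: ereal_inf_lbound; exists b. Qed.

Let c_fin : c \is a fin_num.
Proof.
have [[b0 _] _] := dir.
rewrite ge0_fin_numE; last by apply: le_ereal_inf_tmp => _ [b _ <-]; exact: measure_ge0.
rewrite (le_lt_trans (c_le b0))// (le_lt_trans _ fB)// le_measure ?inE//.
exact: subIsetl.
Qed.

(* [eps * \1_G] is a lower bound of the net in E. *)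
Lemma null_of_dev_null (G : set T) : measurable G -> (mu G < +oo)%E ->
  (forall b, mu (G `\` [set t | eps <= y b t]) = 0%E) -> mu G = 0%E.
Proof.
move=> mG fG null; pose z t := eps * (\1_G t : R).
have z_le b : ale mu z (y b).
  have : mu.-negligible (G `\` [set t | eps <= y b t]).
    by apply/negligibleP; [exact: measurableD|exact: null].
  move=> /(@ae_of_negligible _ _ _ mu _ (fun t => G t -> eps <= y b t)) Gy.
  have {}Gy : {ae mu, forall t, G t -> eps <= y b t}.
    by apply: Gy => t nGy Gt; apply: contrapT => ?; apply: nGy.
  apply: filterS2 Gy (y_ge0 b) => t Gy y0; rewrite /z indicE.
  by case: (boolP (t \in G)) => [/set_mem/Gy|_]; rewrite ?mulr1 ?mulr0.
have := y_inf0 (L0sfZ eps (L0sf_indic mG fG)) z_le.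
move=> /negligibleS null_z; apply/negligibleP => //; apply: null_z => t Gt /=.
by rewrite /z indicE mem_set// mulr1 leNgt eps0.
Qed.

Lemma dev_minimizing_seq : exists bs : nat -> J,
  (forall k n, (k <= n)%N -> le (bs k) (bs n)) /\
  (forall n, (mu (D (bs n)) < c + (dyadic n)%:E)%E).
Proof.
have near_c n : exists b, (mu (D b) < c + (dyadic n)%:E)%E.
  have : (c < c + (dyadic n)%:E)%E by rewrite lteDl// lte_fin dyadic_gt0.
  by move=> /ereal_inf_lt[_ [b _ <-] ?]; exists b.
have [bp Hbp] := choice near_c.
have [bs [bs_mono bp_bs]] := directed_cofinal_seq dir bp.
by exists bs; split => // n; exact: le_lt_trans (muD_decr (bp_bs n)) (Hbp n).
Qed.

Section minimizing_sequence.
Variable bs : nat -> J.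
Hypotheses (bs_mono : forall k n, (k <= n)%N -> le (bs k) (bs n))
  (bs_near : forall n, (mu (D (bs n)) < c + (dyadic n)%:E)%E).

(* The sets [D (bs n)] are only nonincreasing up to null sets; their
   cumulative intersections [Gn n] are nonincreasing. *)
Let Gn n := B `&` \bigcap_(k in [set k | (k <= n)%N]) [set t | eps <= y (bs k) t].

Let mGn n : measurable (Gn n).
Proof. by apply: measurableI => //; apply: bigcap_measurableType => k _. Qed.

Let Gn_nonincreasing : nonincreasing_seq Gn.
Proof.
move=> k n kn; apply/subsetPset => t [Bt Gt]; split => // j /= jk.
by apply: Gt; exact: leq_trans jk kn.
Qed.

Let Gn_ae n : {ae mu, forall t, D (bs n) t -> Gn n t}.
Proof.
have decr k : {ae mu, forall t, (k <= n)%N -> y (bs n) t <= y (bs k) t}.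
  have [kn|nk] := boolP (k <= n)%N; last exact: aeW.
  by apply: filterS (y_decr (bs_mono kn)) => t ? _.
apply: filterS (ae_foralln decr) => t yk [Bt ebt]; split => // k /= kn.
exact: le_trans ebt (yk k kn).
Qed.

Let measure_Gn n : mu (Gn n) = mu (D (bs n)).
Proof.
apply/eqP; rewrite eq_le; apply/andP; split; last exact: le_measure_ae (Gn_ae n).
by rewrite le_measure ?inE// => t [Bt Gt]; split => //; exact: Gt n (leqnn n).
Qed.

Lemma dev_inf_witness : exists G, [/\ measurable G, (mu G < +oo)%E, (c <= mu G)%E &
  forall b, mu (G `\` [set t | eps <= y b t]) = 0%E].
Proof.
pose G := \bigcap_n Gn n.
have mG : measurable G by exact: bigcapT_measurable.
have G0 : (mu (Gn 0%N) < +oo)%E.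
  by rewrite measure_Gn (le_lt_trans _ fB)// le_measure ?inE//; exact: subIsetl.
exists G; split => //.
- by rewrite (le_lt_trans _ G0)// le_measure ?inE// => t /(_ 0%N I).
- rewrite -(cvg_lim _ (nonincreasing_cvg_mu G0 mGn mG Gn_nonincreasing))//.
  apply: lime_ge; first by apply/cvg_ex; exists (mu G); exact: nonincreasing_cvg_mu.
  by apply: nearW => n /=; rewrite measure_Gn.
move=> b; set H := G `\` _.
have mH : measurable H by exact: measurableD.
apply/eqP; rewrite eq_le measure_ge0 andbT; apply/lee_addgt0Pr => e e0; rewrite add0e.
have [n _ /(_ n (leqnn n)) dyadic_e] := dyadic_lt e0.
have [_ [_ [_ dirl]]] := dir; have [b' [bb' bnb']] := dirl b (bs n).
have muD_b' : (mu (D b') <= mu (Gn n `\` H))%E.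
  apply: le_measure_ae => //; first exact: measurableD.
  apply: filterS3 (Gn_ae n) (y_decr bnb') (y_decr bb') => t DG yn yb [Bt eb't].
  split; first by apply: DG; split => //; exact: le_trans eb't yn.
  by move=> [_ /= nH]; apply: nH; exact: le_trans eb't yb.
have split_n : mu (Gn n) = (mu (Gn n `\` H) + mu H)%E.
  rewrite (measureDI mu (mGn n) mH); congr (_ + _)%E; congr (mu _).
  apply/seteqP; split => t; first by case.
  by move=> Ht; split => //; have [Gt _] := Ht; exact: Gt n I.
have : (c + mu H < c + (dyadic n)%:E)%E.
  apply: le_lt_trans (bs_near n); rewrite -measure_Gn split_n leeD2r//.
  exact: le_trans (c_le b') muD_b'.
by rewrite lteD2lE// => /ltW /le_trans; apply; rewrite lee_fin ltW.
Qed.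

End minimizing_sequence.

Lemma decreasing_net_dev_lt (delta : R) : 0 < delta ->
  exists b, (mu (B `&` [set t | (eps <= y b t)%R]) < delta%:E)%E.
Proof.
move=> delta0; have [clt|cge] := ltP c delta%:E.
  by have [_ [b _ <-] ?] := ereal_inf_lt clt; exists b.
have [bs [bs_mono bs_near]] := dev_minimizing_seq.
have [G [mG fG cG Gnull]] := dev_inf_witness bs_mono bs_near.
move: cG; rewrite (null_of_dev_null mG fG Gnull) => c0.
by move: (le_trans cge c0); rewrite lee_fin leNgt delta0.
Qed.

End decreasing_net.

Section uo_Lebesgue.
Context {d : measure_display} {T : measurableType d} {R : realType}.
Variable mu : {measure set T -> \bar R}.

Lemma uo_conv_lm_tconv (A : Type) (le : A -> A -> Prop) (x : A -> T -> R)
    (f : T -> R) :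
  (forall a, L0sf mu (x a)) -> L0sf mu f -> uo_conv mu le x f -> lm_tconv mu le x f.
Proof.
move=> Lx Lf uo V [B [eps [mB fB eps0 HV]]].
have [J [leJ [y [dirJ Ly decr [ge0 inf0] ev]]]] := uo _ (L0sf_indic mB fB).
(* The net is tested against [\1_B], which caps [`|x a - f|] at [1] on [B]. *)
pose eps' := Num.min eps 1; have eps'0 : 0 < eps' by rewrite lt_min eps0 ltr01.
have [b0 Hb0] := decreasing_net_dev_lt dirJ Ly decr ge0 inf0 mB fB eps'0 eps0.
have [a0 Ha0] := ev b0.
exists a0 => a /Ha0 xy; apply: HV; first exact: Lx.
apply: le_lt_trans Hb0; apply: le_measure_ae.
- exact: measurable_dist_dev (Lx a).1 Lf.1.
- apply: measurableI => //.
  by apply: measurable_ler_set; [exact: measurable_cst|exact: (Ly _).1].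
apply: filterS xy => t xy [Bt /= et]; split => //=; apply: le_trans xy.
rewrite subr0 indicE mem_set// normr1 ger0_norm; last by rewrite le_min normr_ge0 ler01.
by rewrite le_min !ge_min et lexx orbT.
Qed.

End uo_Lebesgue.

Theorem corollary5p12 (d : measure_display) (T : measurableType d) (R : realType)
    (mu : {measure set T -> \bar R}) :
  semi_finite mu ->
  [/\ (* the topology of local convergence in measure is a uo-Lebesgue topology on E *)
      lm_is_uo_Lebesgue mu,
      (* its net convergence is local convergence in measure *)
      (forall (A : Type) (le : A -> A -> Prop) (x : A -> T -> R) (f : T -> R),
         directed le -> (forall a, L0sf mu (x a)) -> L0sf mu f ->
         (lm_tconv mu le x f <-> lm_conv mu le x f)),
      (* E has the countable sup property *)
      countable_sup_property mu,
      (* (1) *)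
      (forall (A : Type) (le : A -> A -> Prop) (x : A -> T -> R) (f : T -> R),
         directed le -> (forall a, L0sf mu (x a)) -> L0sf mu f ->
         lm_conv mu le x f ->
         exists alpha : nat -> A,
           [/\ embedded le alpha,
               {ae mu, forall t, (fun n => x (alpha n) t) @ \oo --> f t} &
               lm_conv mu natle (fun n => x (alpha n)) f]) &
      (* (2) *)
      (forall (x : nat -> T -> R) (f : T -> R),
         (forall n, L0sf mu (x n)) -> L0sf mu f ->
         (lm_conv mu natle x f <->
          forall phi : nat -> nat, {homo phi : m n / (m < n)%N} ->
            exists psi : nat -> nat, {homo psi : m n / (m < n)%N} /\
              {ae mu, forall t, (fun n => x (phi (psi n)) t) @ \oo --> f t}))].
Proof.
move=> _; split.
- split.
  + exact: lm_hausdorff.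
  + exact: lm_add_continuous.
  + exact: lm_scale_continuous.
  + exact: lm_solid_basis.
  + by move=> A le x f _; exact: uo_conv_lm_tconv.
- by move=> A le x f _; exact: lm_tconv_iff_lm_conv.
- exact: L0sf_countable_sup.
- exact: lm_conv_embedded_sequence.
- exact: lm_conv_iff_subseq_ae_cvg.
Qed.
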